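(* For some constants $C\in[1,\infty)$, $\alpha\in(0,\infty)$, $\varrho_\alpha\in(0,\alpha\wedge1)$, $c\in(0,1)$ and $t_0\in\mathbb{N}$, let $h_t=t^{-\alpha}$ for all $t\ge1$ and let $(t_p)_{p\ge0}$ satisfy $t_p=t_{p-1}+\lceil C_{p-1}\log(t_{p-1})\vee C\rceil$ for $p\ge1$, for some $C_{p-1}\in[c\,t_{p-1}^{\varrho_\alpha},t_{p-1}^{\varrho_\alpha}/c]$. Then $(h_t)$ and $(t_p)$ satisfy: (1) $\log(h_{t_{p-1}})/(t_p-t_{p-1})\to0$ and $(t_p-t_{p-1})\sum_{s=t_{p-1}+1}^{t_p-1}h_s^2\to0$; (2) $h_{t_p}<h_{t_{p-1}}$ for all $p$ and $\liminf_{p\to\infty}(h_{t_p}t_p^{\alpha'}+t_p^{-\alpha'}/h_{t_p})>0$ for some $\alpha'\in(0,\infty)$; (3) $\limsup_{p\to\infty}(t_{p+1}-t_p)/(t_p-t_{p-1})<\infty$. Moreover, they also satisfy (4) $|\zeta(h_{t_p}^{-\beta_\star})|^{-2k_\star}\sum_{i=1}^p(t_i-t_{i-1})^{-k_\star\mathds{1}_{\mathbb{N}}(k_\star)}\to0$ for some $\beta_\star\in(0,\infty)$, provided (A6) holds for some $k_\star>(1+\varrho_\alpha)/\varrho_\alpha$, with $\zeta$ the function of (A6).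
   Context: $(Y_t)_{t\ge1}$ are i.i.d. on $(\Omega,\mathcal{F},\mathbb{P})$ with values in $(\mathsf{Y},\mathcal{Y})$; $\{f_\theta,\theta\in\Theta\subseteq\mathbb{R}^d\}$ are densities w.r.t. a $\sigma$-finite measure, $\theta_\star=\arg\max_{\theta\in\Theta}\mathbb{E}\{\log f_\theta(Y_1)\}$; $\mathbb{E}(g)=\mathbb{E}\{g(Y_1)\}$; $\tilde f_\theta=f_\theta$ on $\Theta$ and $0$ otherwise; $V_\epsilon=\Theta\setminus B_\epsilon(\theta_\star)$ with $B_\epsilon$ the open Euclidean ball. (A6) (for a given $k_\star\in\{1/2\}\cup\mathbb{N}$) One of the following holds: (i) there is $C_1\in(0,\infty)$ with $\sup_{C\ge C_1}\mathbb{E}[|\sup_{\theta\in V_C}\log(\tilde f_\theta/f_{\theta_\star})-\mathbb{E}\{\sup_{\theta\in V_C}\log(\tilde f_\theta/f_{\theta_\star})\}|^{2k_\star}]<\infty$ and $\limsup_{C\to\infty}\zeta(C)(\log C)^{-1}<0$ with $\zeta(C)=\mathbb{E}\{\sup_{\theta\in V_C}\log(\tilde f_\theta/f_{\theta_\star})\}$; (ii) $\limsup_{C\to\infty}\zeta(C)(\log C)^{-1}<0$ with $\zeta(C)=\log\{\sup_{\theta\in V_C}\mathbb{E}(\tilde f_\theta/f_{\theta_\star})\}$; (iii) $\mathbb{E}(|\log f_{\theta_\star}|^{2k_\star})<\infty$ and $\limsup_{C\to\infty}\zeta(C)(\log C)^{-1}<0$ with $\zeta(C)=\log\{\sup_{\theta\in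 V_C}\mathbb{E}(\tilde f_\theta)\}$. *)

From HB Require Import structures.
From mathcomp Require Import all_boot all_order all_algebra.
From mathcomp Require Import all_classical all_reals all_analysis.
Set Implicit Arguments. Unset Strict Implicit. Unset Printing Implicit Defensive.
Import Order.TTheory GRing.Theory Num.Theory.
Import numFieldNormedType.Exports.
Local Open Scope classical_set_scope.
Local Open Scope ring_scope.

Definition hseq (R : realType) (alpha : R) (t : nat) : R := (t%:R) `^ (- alpha).

Definition indN (R : realType) (k : R) : R :=
  if `[< exists n : nat, (0 < n)%N /\ k = n%:R >] then 1 else 0.

Definition eabs_invpow (R : realType) (x : \bar R) (a : R) : R :=
  match x with
  | r%:E => `|r| `^ (- a)
  | _ => 0
  end.

Definition enorm (R : realType) (d : nat) (v : 'rV[R]_d) : R :=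
  Num.sqrt (\sum_(i < d) (v ord0 i) ^+ 2).

Definition Vset (R : realType) (d : nat) (Theta : set 'rV[R]_d)
  (theta_s : 'rV[R]_d) (eps : R) : set 'rV[R]_d :=
  Theta `\` [set th | enorm (th - theta_s) < eps].

Definition ftilde (R : realType) (d : nat) (Y : Type) (Theta : set 'rV[R]_d)
  (f : 'rV[R]_d -> Y -> R) (th : 'rV[R]_d) (y : Y) : R :=
  if `[< Theta th >] then f th y else 0.

Definition Ex (R : realType) (dO dY : measure_display)
  (Om : measurableType dO) (Y : measurableType dY) (P : probability Om R)
  (Ys : nat -> Om -> Y) (g : Y -> \bar R) : \bar R :=
  (\int[P]_w g (Ys 1%N w))%E.

(* log( tilde f_theta / f_theta_star ), computed in the extended reals as
   log tilde f_theta - log f_theta_star  (log 0 = -oo) *)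
Definition logratio (R : realType) (d : nat) (Y : Type) (Theta : set 'rV[R]_d)
  (f : 'rV[R]_d -> Y -> R) (theta_s th : 'rV[R]_d) (y : Y) : \bar R :=
  (lne (ftilde Theta f th y)%:E - lne (f theta_s y)%:E)%E.

Definition suplogratio (R : realType) (d : nat) (Y : Type) (Theta : set 'rV[R]_d)
  (f : 'rV[R]_d -> Y -> R) (theta_s : 'rV[R]_d) (C : R) (y : Y) : \bar R :=
  ereal_sup [set logratio Theta f theta_s th y | th in Vset Theta theta_s C].

Definition zeta1 (R : realType) (d : nat) (dO dY : measure_display)
  (Om : measurableType dO) (Y : measurableType dY) (P : probability Om R)
  (Ys : nat -> Om -> Y) (Theta : set 'rV[R]_d) (f : 'rV[R]_d -> Y -> R)
  (theta_s : 'rV[R]_d) (C : R) : \bar R :=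
  Ex P Ys (suplogratio Theta f theta_s C).

Definition zeta2 (R : realType) (d : nat) (dO dY : measure_display)
  (Om : measurableType dO) (Y : measurableType dY) (P : probability Om R)
  (Ys : nat -> Om -> Y) (Theta : set 'rV[R]_d) (f : 'rV[R]_d -> Y -> R)
  (theta_s : 'rV[R]_d) (C : R) : \bar R :=
  lne (ereal_sup [set Ex P Ys (fun y => expeR (logratio Theta f theta_s th y))
                 | th in Vset Theta theta_s C]).

Definition zeta3 (R : realType) (d : nat) (dO dY : measure_display)
  (Om : measurableType dO) (Y : measurableType dY) (P : probability Om R)
  (Ys : nat -> Om -> Y) (Theta : set 'rV[R]_d) (f : 'rV[R]_d -> Y -> R)
  (theta_s : 'rV[R]_d) (C : R) : \bar R :=
  lne (ereal_sup [set Ex P Ys (fun y => (ftilde Theta f th y)%:E)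
                 | th in Vset Theta theta_s C]).

Definition neg_log_limsup (R : realType) (zeta : R -> \bar R) : Prop :=
  (limf_esup (fun C : R => zeta C * ((ln C)^-1)%:E) (@pinfty_nbhs R) < 0)%E.

Definition A6_i (R : realType) (d : nat) (dO dY : measure_display)
  (Om : measurableType dO) (Y : measurableType dY) (P : probability Om R)
  (Ys : nat -> Om -> Y) (Theta : set 'rV[R]_d) (f : 'rV[R]_d -> Y -> R)
  (theta_s : 'rV[R]_d) (k : R) : Prop :=
  (exists2 C1 : R, 0 < C1 &
     (ereal_sup [set Ex P Ys (fun y =>
                   poweR (`| suplogratio Theta f theta_s C y
                            - zeta1 P Ys Theta f theta_s C |)%E (2 * k))
                | C in [set C | (C1 <= C)%R]] < +oo)%E)
  /\ neg_log_limsup (zeta1 P Ys Theta f theta_s).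

Definition A6_ii (R : realType) (d : nat) (dO dY : measure_display)
  (Om : measurableType dO) (Y : measurableType dY) (P : probability Om R)
  (Ys : nat -> Om -> Y) (Theta : set 'rV[R]_d) (f : 'rV[R]_d -> Y -> R)
  (theta_s : 'rV[R]_d) : Prop :=
  neg_log_limsup (zeta2 P Ys Theta f theta_s).

Definition A6_iii (R : realType) (d : nat) (dO dY : measure_display)
  (Om : measurableType dO) (Y : measurableType dY) (P : probability Om R)
  (Ys : nat -> Om -> Y) (Theta : set 'rV[R]_d) (f : 'rV[R]_d -> Y -> R)
  (theta_s : 'rV[R]_d) (k : R) : Prop :=
  (Ex P Ys (fun y => poweR (`| lne (f theta_s y)%:E |)%E (2 * k)) < +oo)%E
  /\ neg_log_limsup (zeta3 P Ys Theta f theta_s).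

Definition iid_seq (R : realType) (dO dY : measure_display)
  (Om : measurableType dO) (Y : measurableType dY) (P : probability Om R)
  (Ys : nat -> Om -> Y) : Prop :=
  (forall t, (0 < t)%N -> measurable_fun setT (Ys t))
  /\ (forall t (A : set Y), (0 < t)%N -> measurable A ->
        P (Ys t @^-1` A) = P (Ys 1%N @^-1` A))
  /\ (forall (s : seq nat) (A : nat -> set Y), uniq s ->
        (forall i, i \in s -> (0 < i)%N) -> (forall i, measurable (A i)) ->
        fine (P (\big[setI/setT]_(i <- s) (Ys i @^-1` A i)))
        = \prod_(i <- s) fine (P (Ys i @^-1` A i))).

Definition density_model (R : realType) (d : nat) (dO dY : measure_display)
  (Om : measurableType dO) (Y : measurableType dY) (P : probability Om R)
  (Ys : nat -> Om -> Y) (nu : {measure set Y -> \bar R})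
  (Theta : set 'rV[R]_d) (f : 'rV[R]_d -> Y -> R) (theta_s : 'rV[R]_d) : Prop :=
  sigma_finite setT nu
  /\ (forall th, Theta th ->
        [/\ measurable_fun setT (f th), (forall y, 0 <= f th y)
          & (\int[nu]_y (f th y)%:E = 1)%E])
  /\ Theta theta_s
  /\ (forall th, Theta th -> th <> theta_s ->
        (Ex P Ys (fun y => lne (f th y)%:E) < Ex P Ys (fun y => lne (f theta_s y)%:E))%E).

(* Write T = t_p and D = t_(p+1) - t_p.  The recursion gives
   c T^rho ln T <= D <= T^rho ln T / c + C + 1, so everything reduces to
   comparing powers of T with ln T: ln h_T / D = O(T^-rho), D h_T = O(T^(rho -
   alpha) ln T), and t_(p+1) <= K t_p keeps D_(p+1) / D_p bounded.  For (4)
   only k in N is possible; as rho k >= 1, T <= T^(rho k) = O(D^k), hence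
   D^-k = O(ln t_(p+1) - ln t_p) and the sum telescopes to O(ln t_p), while
   (A6) gives |zeta(x)| >= d ln x, so the product is O(1 / ln t_p).  The choice
   beta = 1 / alpha makes h_(t_p)^-beta = t_p. *)

From HB Require Import structures.
From mathcomp Require Import all_boot all_order all_algebra.
From mathcomp Require Import all_classical all_reals all_analysis.
From mathcomp Require Import lra ring.
Import Order.TTheory GRing.Theory Num.Theory.
Import numFieldNormedType.Exports.
Local Open Scope classical_set_scope.
Local Open Scope ring_scope.
Set Implicit Arguments. Unset Strict Implicit.

Section RealAsymptotics.
Variable R : realType.
Implicit Types (a b x y : R).

Lemma ln_le_subr1 x : 0 < x -> ln x <= x - 1.
Proof. by move=> x0; have := @le_ln1Dx R (x - 1); rewrite (addrC 1) subrK; apply; lra. Qed.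

Lemma ln_le_powR b x : 0 < x -> b * ln x <= x `^ b.
Proof. by move=> x0; rewrite -ln_powR ltW // ln_sublinear // powR_gt0. Qed.

Lemma divr_le_lnB x y : 0 < x -> 0 < y -> (y - x) / y <= ln y - ln x.
Proof.
move=> x0 y0; have := ln_le_subr1 (divr_gt0 x0 y0).
rewrite ln_div ?posrE // mulrBl divff ?gt_eqF //; lra.
Qed.

Lemma powRN_le_powRN a x y : 0 <= a -> 0 < x <= y -> y `^ (- a) <= x `^ (- a).
Proof.
move=> a0 /andP[x0 xy]; rewrite !powRN lef_pV2 ?posrE ?powR_gt0 //; last lra.
by rewrite ge0_ler_powR // nnegrE; lra.
Qed.

Lemma ln_cvgy : @ln R x @[x --> +oo] --> +oo.
Proof.
apply/cvgryPge => A; near=> x; rewrite -ler_expR lnK ?posrE; last by near: x; exact: nbhs_pinfty_gt.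
by near: x; exact: nbhs_pinfty_ge.
Unshelve. all: end_near.
Qed.

Lemma invln_cvgy0 : (@ln R x)^-1 @[x --> +oo] --> 0.
Proof.
apply/(@cvgrVy _ _ _ _ (fun x => (ln x)^-1)).
  by near=> x; rewrite invr_gt0 ln_gt0 //; near: x; exact: nbhs_pinfty_gt.
by rewrite /unstable.inv_fun; under eq_fun do rewrite invrK; exact: ln_cvgy.
Unshelve. all: end_near.
Qed.

Lemma powR_cvgy b : 0 < b -> x `^ b @[x --> +oo] --> +oo.
Proof.
move=> b0; apply/cvgryPge => A; near=> x.
apply: le_trans (ln_le_powR b _); last by near: x; exact: nbhs_pinfty_gt.
rewrite -ler_pdivrMl // mulrC; near: x; exact: (cvgryPge _).1 ln_cvgy _.
Unshelve. all: end_near.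
Qed.

Lemma powRN_cvgy0 b : 0 < b -> x `^ (- b) @[x --> +oo] --> 0.
Proof.
move=> b0; under eq_fun do rewrite powRN.
apply/(@cvgrVy _ _ _ _ (fun x => (x `^ b)^-1)).
  by near=> x; rewrite invr_gt0 powR_gt0 //; near: x; exact: nbhs_pinfty_gt.
by rewrite /unstable.inv_fun; under eq_fun do rewrite invrK; exact: powR_cvgy.
Unshelve. all: end_near.
Qed.

Lemma ln_mul_powRN_cvgy0 b : 0 < b -> ln x * x `^ (- b) @[x --> +oo] --> 0.
Proof.
move=> b0.
have : x `^ (- (b / 2)) @[x --> +oo] --> 0 by apply: powRN_cvgy0; lra.
move/(cvgM (cvg_cst (2 / b))); rewrite mulr0; apply: (squeeze_cvgr _ (cvg_cst 0)).
near=> x; have x1 : 1 <= x by near: x; exact: nbhs_pinfty_ge.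
have x0 : 0 < x by lra.
rewrite mulr_ge0 ?ln_ge0 ?powR_ge0 //=.
have -> : x `^ (- (b / 2)) = x `^ (b / 2) * x `^ (- b).
  by rewrite -powRD ?(gt_eqF x0) ?implybT // (_ : b / 2 - b = - (b / 2)) //; field.
rewrite mulrA ler_wpM2r ?powR_ge0 // -invf_div ler_pdivlMl ?divr_gt0 //.
exact: ln_le_powR.
Unshelve. all: end_near.
Qed.

Lemma cvg0_norm_le_comp {T : Type} {F : set_system T} {FF : Filter F}
    (u X : T -> R) (g : R -> R) :
  X @ F --> +oo -> g x @[x --> +oo] --> 0 ->
  (\forall p \near F, `|u p| <= g (X p)) -> u @ F --> 0.
Proof.
move=> Xy g0 ug; apply: norm_cvg0.
apply: (squeeze_cvgr _ (cvg_cst 0) (cvg_comp _ _ Xy g0)).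
by apply: filterS ug => p ->; rewrite normr_ge0.
Qed.

End RealAsymptotics.

Lemma sum_hseq_sqr_le (R : realType) (alpha : R) (a b : nat) :
  0 <= alpha -> (0 < a)%N -> (a <= b)%N ->
  \sum_(a.+1 <= s < b) hseq alpha s ^+ 2 <= (b%:R - a%:R) * hseq alpha a ^+ 2.
Proof.
move=> alpha0 a0 ab.
have [ba|a1b] := leqP b a.+1.
  by rewrite big_geq // mulr_ge0 ?sqr_ge0 // subr_ge0 ler_nat.
apply: le_trans (ler_sum_nat (G := fun=> hseq alpha a ^+ 2) _) _.
  move=> s /andP[lt_as _]; rewrite lerXn2r ?nnegrE ?powR_ge0 //.
  by rewrite powRN_le_powRN // ltr0n a0 ler_nat ltnW.
have ba : (b - a.+1)%:R <= b%:R - a%:R :> R by rewrite natrB ?(ltnW a1b) // -natr1; lra.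
by rewrite sumr_const_nat -[_ *+ (b - a.+1)]mulr_natl (ler_wpM2r (sqr_ge0 _) ba).
Qed.

Lemma limn_esup_le (R : realType) (u : (\bar R)^nat) (M : \bar R) :
  (forall n, (u n <= M)%E) -> (limn_esup u <= M)%E.
Proof.
move=> uM; rewrite limn_esup_lim; apply: lime_le; first exact: is_cvg_esups.
by apply: nearW => n; apply: ge_ereal_sup => _ [m _ <-]; exact: uM.
Qed.

Lemma neg_log_limsup_near (R : realType) (zeta : R -> \bar R) : neg_log_limsup zeta ->
  exists2 d : R, 0 < d &
    \forall x \near +oo, (zeta x * ((ln x)^-1)%:E <= (- d)%:E)%E.
Proof.
rewrite /neg_log_limsup limf_esupE => /ereal_inf_lt[_ [V Vy <-]] Vlt0.
have [d d0 supd] : exists2 d : R, 0 < d &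
    (ereal_sup [set zeta x * ((ln x)^-1)%:E | x in V] <= (- d)%:E)%E.
  move: Vlt0; case: ereal_sup => [r | | ] //= r0.
  - by exists (- r); rewrite ?opprK // oppr_gt0 -lte_fin.
  - by exists 1; rewrite ?leNye.
exists d => //; apply: filterS Vy => x Vx.
by apply: le_trans supd; apply: ereal_sup_ubound; exists x.
Qed.

Lemma eabs_invpow_le (R : realType) (z : \bar R) (l d k : R) :
  0 < l -> 1 <= d * l -> 1 <= k -> (z * (l^-1)%:E <= (- d)%:E)%E ->
  eabs_invpow z (2 * k) <= (d * l) ^- 2.
Proof.
move=> l0 dl k1; have dl0 : 0 < d * l by apply: lt_le_trans dl.
case: z => [r | | ] /=.
- rewrite -EFinM lee_fin ler_pdivrMr // mulNr => rd.
  have dlr : d * l <= `|r| by rewrite -normrN; apply: le_trans (ler_norm _); rewrite lerNr.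
  apply: (@le_trans _ _ ((d * l) `^ (- (2 * k)))).
    by apply: powRN_le_powRN; [lra | apply/andP].
  rewrite -powR_invn; last exact: ltW.
  by apply: ler_powR; [exact: dl | lra].
- by rewrite gt0_mulye ?lte_fin ?invr_gt0.
- by rewrite invr_ge0 exprn_ge0 // ltW.
Qed.

Lemma eabs_invpow_ln_cvgy0 (R : realType) (zeta : R -> \bar R) (k : R) :
  1 <= k -> neg_log_limsup zeta ->
  eabs_invpow (zeta x) (2 * k) * ln x @[x --> +oo] --> 0.
Proof.
move=> k1 /neg_log_limsup_near[d d0 zd].
have : (d ^+ 2)^-1 * (ln x)^-1 @[x --> +oo] --> 0.
  by rewrite -(mulr0 (d ^+ 2)^-1); apply: cvgM; [exact: cvg_cst | exact: invln_cvgy0].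
apply: (squeeze_cvgr _ (cvg_cst 0)); near=> x.
have dl : 1 <= d * ln x.
  by rewrite -ler_pdivrMl // mulr1; near: x; exact: (cvgryPge _).1 (@ln_cvgy R) _.
have l0 : 0 < ln x by rewrite -(pmulr_rgt0 _ d0); apply: lt_le_trans dl.
have zx : eabs_invpow (zeta x) (2 * k) <= (d * ln x) ^- 2.
  by apply: eabs_invpow_le => //; near: x; exact: zd.
have z0 : 0 <= eabs_invpow (zeta x) (2 * k) by case: (zeta x) => //= r; exact: powR_ge0.
rewrite mulr_ge0 ?(ltW l0) //=.
have -> : (d ^+ 2)^-1 * (ln x)^-1 = (d * ln x) ^- 2 * ln x by field; rewrite !gt_eqF.
exact: ler_pM z0 (ltW l0) zx (lexx _).
Unshelve. all: end_near.
Qed.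

Section GapSequence.
Variables (R : realType) (C rho c : R) (t : nat -> nat) (Cs : nat -> R).
Hypotheses (C_ge1 : 1 <= C) (rho_gt0 : 0 < rho) (rho_lt1 : rho < 1) (c_gt0 : 0 < c).
Hypothesis t0_gt0 : (0 < t 0)%N.
Hypothesis Cs_bounds : forall p, c * (t p)%:R `^ rho <= Cs p <= (t p)%:R `^ rho / c.
Hypothesis t_rec : forall p, ((t p.+1)%:R : R) =
  (t p)%:R + (Num.ceil (Num.max (Cs p * ln (t p)%:R) C))%:~R.

(* [lra] does not see section hypotheses: they are copied locally when needed. *)

Local Notation T p := ((t p)%:R : R).
Local Notation D p := (T p.+1 - T p).

Lemma gap_bounds p :
  Num.max (Cs p * ln (T p)) C <= D p < Num.max (Cs p * ln (T p)) C + 1.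
Proof.
have /andP[ceil_lt ceil_ge] := ceil_itv (Num.max (Cs p * ln (T p)) C).
by rewrite t_rec addrAC subrr add0r ceil_ge /=; move: ceil_lt; rewrite intrB; lra.
Qed.

Lemma gap_ge1 p : 1 <= D p.
Proof.
have /andP[+ _] := gap_bounds p; apply: le_trans.
by apply: le_trans C_ge1 _; rewrite le_max lexx orbT.
Qed.

Lemma t_ge_index p : p%:R + 1 <= T p.
Proof.
elim: p => [|p IHp]; first by rewrite add0r ler1n.
by have := gap_ge1 p; rewrite -natr1; lra.
Qed.

Lemma t_ge1 p : 1 <= T p.
Proof. by apply: le_trans (t_ge_index p); rewrite lerDr. Qed.

Lemma ln_t_ge0 p : 0 <= ln (T p).
Proof. exact/ln_ge0/t_ge1. Qed.

Lemma t_cvgy : T p @[p --> \oo] --> +oo.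
Proof.
apply/cvgryPge => A; apply: filterS (nbhs_infty_ger A) => p Ap.
by apply: le_trans (t_ge_index p); lra.
Qed.

Lemma gap_ge p : c * T p `^ rho * ln (T p) <= D p.
Proof.
have /andP[+ _] := gap_bounds p; apply: le_trans; rewrite le_max; apply/orP; left.
by have /andP[+ _] := Cs_bounds p; apply: ler_wpM2r; exact: ln_t_ge0.
Qed.

Lemma gap_le p : D p <= T p `^ rho * ln (T p) / c + C + 1.
Proof.
have /andP[_ /ltW D_le] := gap_bounds p; apply: (le_trans D_le); rewrite lerD2r mulrAC.
have /andP[Cs_ge Cs_le] := Cs_bounds p.
have Cs_ln_le : Cs p * ln (T p) <= T p `^ rho / c * ln (T p).
  by apply: ler_wpM2r Cs_le; exact: ln_t_ge0.
have Cs_ln_ge0 : 0 <= Cs p * ln (T p).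
  by rewrite mulr_ge0 ?ln_t_ge0 // (le_trans _ Cs_ge) // mulr_ge0 ?powR_ge0 ?ltW.
rewrite ge_max lerDr (le_trans Cs_ln_ge0 Cs_ln_le) andbT.
by apply: (le_trans Cs_ln_le); rewrite lerDl (le_trans ler01 C_ge1).
Qed.

Local Notation L := (c^-1 + expR 1).
Local Notation K := (2 + C + (c * (1 - rho))^-1).

Lemma powR_t_le_gap p : T p `^ rho <= L * D p.
Proof.
have D1 := gap_ge1 p; have T1 := t_ge1 p.
have eD0 : 0 <= expR 1 * D p by rewrite mulr_ge0 ?expR_ge0 //; lra.
rewrite mulrDl; have [ln_ge1|ln_lt1] := lerP 1 (ln (T p)).
- apply: ler_wpDr eD0 _; rewrite ler_pdivlMl //.
  by apply: le_trans (ler_peMr _ ln_ge1) (gap_ge p); rewrite mulr_ge0 ?powR_ge0 ?ltW.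
- apply: ler_wpDl; first by rewrite mulr_ge0 ?invr_ge0 ?ltW //; lra.
  apply: le_trans (ler1_powR T1 (ltW rho_lt1)) _.
  apply: le_trans (ler_peMr (expR_ge0 _) D1).
  by rewrite -[X in X <= _]lnK ?posrE ?ler_expR ?ltW //; lra.
Qed.

Lemma t_succ_le p : T p.+1 <= K * T p.
Proof.
have T1 := t_ge1 p; have T0 : 0 < T p by lra.
have ln_le : (1 - rho) * ln (T p) <= T p `^ (1 - rho) by exact: ln_le_powR.
have powR_split : T p `^ rho * T p `^ (1 - rho) = T p.
  by rewrite -powRD ?(gt_eqF T0) ?implybT // subrKC powRr1 // ltW.
have lnT_le : T p `^ rho * ln (T p) / c <= (c * (1 - rho))^-1 * T p.
  have -> : T p `^ rho * ln (T p) / c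
            = (c * (1 - rho))^-1 * (T p `^ rho * ((1 - rho) * ln (T p))).
    by field; rewrite (gt_eqF c_gt0) subr_eq0 gt_eqF.
  apply: ler_wpM2l; first by rewrite invr_ge0 mulr_ge0 ?subr_ge0 // ltW.
  by rewrite -[leRHS]powR_split ler_wpM2l ?powR_ge0.
have C0 : 0 <= C + 1 by have := C_ge1; lra.
have CT := ler_peMr C0 T1.
have -> : K * T p = T p + (c * (1 - rho))^-1 * T p + (C + 1) * T p by ring.
by have := gap_le p; lra.
Qed.

Lemma gap_succ_le p : D p.+1 <= (K * ln K * L / c + K / c ^+ 2 + C + 1) * D p.
Proof.
have D1 := gap_ge1 p; have T1 := t_ge1 p; have T1' := t_ge1 p.+1.
have c0 := c_gt0; have C1 := C_ge1; have r0 := rho_gt0; have r1 := rho_lt1.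
have K1 : 1 <= K.
  have : 0 <= (c * (1 - rho))^-1 by rewrite invr_ge0 ltW // mulr_gt0 // subr_gt0.
  lra.
have tK := t_succ_le p.
have powR_le : T p.+1 `^ rho <= K * T p `^ rho.
  have [r0' T0' K0 T0] : [/\ 0 <= rho, 0 <= T p.+1, 0 <= K & 0 <= T p] by split; lra.
  apply: (@le_trans _ _ ((K * T p) `^ rho)).
    by apply: ge0_ler_powR; rewrite ?nnegrE ?mulr_ge0.
  by rewrite powRM //; apply: ler_wpM2r; [exact: powR_ge0 | exact: ler1_powR (ltW r1)].
have ln_le : ln (T p.+1) <= ln K + ln (T p).
  have [T0 T'0 K0] : [/\ 0 < T p, 0 < T p.+1 & 0 < K] by split; lra.
  by rewrite -lnM ?posrE // ler_ln ?posrE ?mulr_gt0.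
have prod_le : T p.+1 `^ rho * ln (T p.+1) <= K * ln K * (L * D p) + K * (D p / c).
  apply: le_trans (ler_pM (powR_ge0 _ _) (ln_t_ge0 _) powR_le ln_le) _.
  have lnK0 : 0 <= ln K by apply: ln_ge0.
  have [tL tD] := (powR_t_le_gap p, gap_ge p).
  have tD' : T p `^ rho * ln (T p) <= D p / c by rewrite ler_pdivlMr // mulrC mulrA.
  have K0 : 0 <= K by lra.
  have -> : K * T p `^ rho * (ln K + ln (T p))
            = K * ln K * T p `^ rho + K * (T p `^ rho * ln (T p)) by ring.
  apply: lerD; first exact: ler_pM (mulr_ge0 K0 lnK0) (powR_ge0 _ _) (lexx _) tL.
  exact: ler_pM K0 (mulr_ge0 (powR_ge0 _ _) (ln_t_ge0 p)) (lexx _) tD'.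
apply: le_trans (gap_le p.+1) _.
have CD : C + 1 <= (C + 1) * D p by apply: ler_peMr D1; lra.
have -> : (K * ln K * L / c + K / c ^+ 2 + C + 1) * D p
          = (K * ln K * (L * D p) + K * (D p / c)) / c + (C + 1) * D p.
  by field; rewrite (gt_eqF c0) subr_eq0 (gt_eqF r1).
have : T p.+1 `^ rho * ln (T p.+1) / c <= (K * ln K * (L * D p) + K * (D p / c)) / c.
  by rewrite ler_pM2r ?invr_gt0.
lra.
Qed.

Lemma gap_powRN_le_lnB k p : 1 <= rho * k ->
  D p `^ (- k) <= (L `^ k + 1) * (ln (T p.+1) - ln (T p)).
Proof.
move=> rk; have D1 := gap_ge1 p; have T1 := t_ge1 p; have c0 := c_gt0.
have k0 : 0 <= k by have := rho_gt0; nra.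
have L0 : 0 <= L by rewrite addr_ge0 ?expR_ge0 // invr_ge0 ltW.
have [D0 T0 T'0] : [/\ 0 <= D p, 0 < T p & 0 < T p.+1] by split; lra.
have Dk1 : 1 <= D p `^ k by have := ler_powR D1 k0; rewrite powRr0.
have T_le : T p <= L `^ k * D p `^ k.
  apply: le_trans (le1r_powR T1 rk) _.
  by rewrite powRrM -powRM ?ge0_ler_powR ?nnegrE ?powR_ge0 ?powR_t_le_gap ?mulr_ge0.
have T'_le : T p.+1 <= (L `^ k + 1) * D p * D p `^ k.
  have -> : (L `^ k + 1) * D p * D p `^ k
            = L `^ k * D p `^ k * D p + D p * D p `^ k by ring.
  have eT : T p.+1 = T p + D p by ring.
  rewrite [leLHS]eT; apply: lerD; last by apply: ler_peMr Dk1; lra.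
  by apply: le_trans T_le (ler_peMr (mulr_ge0 (powR_ge0 _ _) (powR_ge0 _ _)) D1).
apply: le_trans (_ : _ <= (L `^ k + 1) * (D p / T p.+1)) _; last first.
  apply: ler_wpM2l; first by rewrite addr_ge0 ?powR_ge0.
  exact: divr_le_lnB T0 T'0.
have Dk0 : 0 < D p `^ k by lra.
by rewrite powRN mulrA ler_pdivlMr // ler_pdivrMl // mulrC.
Qed.

Lemma sum_gap_powRN_le k p : 1 <= rho * k ->
  \sum_(1 <= i < p.+1) (T i - T i.-1) `^ (- k) <= (L `^ k + 1) * ln (T p).
Proof.
move=> rk; elim: p => [|p IHp].
  by rewrite big_geq // mulr_ge0 ?ln_t_ge0 // addr_ge0 ?powR_ge0.
rewrite big_nat_recr //=; have := gap_powRN_le_lnB p rk.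
rewrite mulrBr; lra.
Qed.

Lemma t_gt0 p : (0 < t p)%N.
Proof. by rewrite -(ltr0n R); apply: lt_le_trans (t_ge1 p). Qed.

Lemma ln_hseq_div_gap_cvg0 (alpha : R) : 0 < alpha ->
  (fun p => ln (hseq alpha (t p)) / D p) @ \oo --> 0.
Proof.
move=> alpha0.
have : alpha / c * x `^ (- rho) @[x --> +oo] --> 0.
  by rewrite -(mulr0 (alpha / c)); apply: cvgM; [exact: cvg_cst | exact: powRN_cvgy0].
move/(cvg0_norm_le_comp t_cvgy); apply; apply: nearW => p.
have [D0 Tr0] : 0 < D p /\ 0 < T p `^ rho.
  by split; [apply: lt_le_trans (gap_ge1 p) | apply: powR_gt0; apply: lt_le_trans (t_ge1 p)].
have lnT0 := ln_t_ge0 p; have c0 := c_gt0.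
have u0 : 0 <= alpha * ln (T p) / D p by rewrite divr_ge0 ?mulr_ge0 // ltW.
rewrite /hseq ln_powR mulNr mulNr normrN (ger0_norm u0).
rewrite powRN ler_pdivrMr //.
have -> : alpha * ln (T p) = alpha / c * (T p `^ rho)^-1 * (c * T p `^ rho * ln (T p)).
  by field; rewrite !gt_eqF.
apply: ler_pM _ _ (lexx _) (gap_ge p).
  by rewrite mulr_ge0 ?divr_ge0 ?invr_ge0 // ltW.
by rewrite mulr_ge0 // mulr_ge0 // ltW.
Qed.

Lemma gap_mul_hseq_cvg0 (alpha : R) : rho < alpha ->
  (fun p => D p * hseq alpha (t p)) @ \oo --> 0.
Proof.
move=> rho_alpha; have alpha0 : 0 < alpha by apply: lt_trans rho_alpha.
have lnT_cvg0 : ln x * x `^ (- (alpha - rho)) / c @[x --> +oo] --> 0.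
  rewrite -(mul0r c^-1); apply: cvgM; last exact: cvg_cst.
  by apply: ln_mul_powRN_cvgy0; rewrite subr_gt0.
have powT_cvg0 : (C + 1) * x `^ (- alpha) @[x --> +oo] --> 0.
  by rewrite -(mulr0 (C + 1)); apply: cvgM; [exact: cvg_cst | exact: powRN_cvgy0].
have : ln x * x `^ (- (alpha - rho)) / c + (C + 1) * x `^ (- alpha)
       @[x --> +oo] --> 0 by rewrite -[0]addr0; exact: cvgD lnT_cvg0 powT_cvg0.
move/(cvg0_norm_le_comp t_cvgy); apply; apply: nearW => p.
have [D0 T0] : 0 <= D p /\ 0 < T p.
  by split; [apply: le_trans (gap_ge1 p) | apply: lt_le_trans (t_ge1 p)].
have h0 : 0 <= hseq alpha (t p) by exact: powR_ge0.
have -> : T p `^ (- (alpha - rho)) = T p `^ rho * hseq alpha (t p).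
  by rewrite -powRD ?(gt_eqF T0) ?implybT // opprB addrC.
have -> : ln (T p) * (T p `^ rho * hseq alpha (t p)) / c + (C + 1) * hseq alpha (t p)
          = (T p `^ rho * ln (T p) / c + C + 1) * hseq alpha (t p) by ring.
rewrite ger0_norm ?mulr_ge0 //; exact: ler_pM D0 h0 (gap_le p) (lexx _).
Qed.

Lemma gap_mul_sum_hseq_sqr_cvg0 (alpha : R) : rho < alpha ->
  (fun p => D p * \sum_((t p).+1 <= s < t p.+1) hseq alpha s ^+ 2) @ \oo --> 0.
Proof.
move=> rho_alpha; have alpha0 : 0 < alpha by apply: lt_trans rho_alpha.
have w0 := gap_mul_hseq_cvg0 rho_alpha.
have : (fun p => D p * hseq alpha (t p) * (D p * hseq alpha (t p))) @ \oo --> 0.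
  by rewrite -(mulr0 0); exact: (cvgM w0 w0).
apply: (squeeze_cvgr _ (cvg_cst 0)); apply: nearW => p /=.
have D0 : 0 < D p by apply: lt_le_trans (gap_ge1 p).
have t_le : (t p <= t p.+1)%N by rewrite -(ler_nat R) -subr_ge0 ltW.
have S_le := sum_hseq_sqr_le (ltW alpha0) (t_gt0 p) t_le.
rewrite mulr_ge0 ?sumr_ge0 ?(ltW D0) //=; last by move=> s _; exact: sqr_ge0.
have -> : D p * hseq alpha (t p) * (D p * hseq alpha (t p))
          = D p * (D p * hseq alpha (t p) ^+ 2) by ring.
by rewrite ler_pM2l.
Qed.

Lemma hseq_t_decreasing (alpha : R) p : 0 < alpha ->
  hseq alpha (t p.+1) < hseq alpha (t p).
Proof.
move=> alpha0; have [T1 D1] := (t_ge1 p, gap_ge1 p).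
have [T0 T'0] : 0 < T p /\ 0 < T p.+1 by split; lra.
rewrite /hseq !powRN ltf_pV2 ?posrE ?powR_gt0 //.
by rewrite gt0_ltr_powR ?nnegrE //; lra.
Qed.

Lemma limn_einf_hseq_powR (alpha : R) :
  limn_einf (fun p => (hseq alpha (t p) * T p `^ alpha
                       + T p `^ (- alpha) / hseq alpha (t p))%:E) = 2%:E.
Proof.
have -> : (fun p => (hseq alpha (t p) * T p `^ alpha
                     + T p `^ (- alpha) / hseq alpha (t p))%:E) = cst 2%:E.
  apply/funext => p; have Tr0 : 0 < T p `^ alpha.
    by apply: powR_gt0; apply: lt_le_trans (t_ge1 p).
  by rewrite /hseq powRN mulVf ?divff ?gt_eqF ?invr_gt0.
exact: (cvg_limn_einf_sup (cvg_cst _)).1.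
Qed.

Lemma limn_esup_gap_ratio_lty :
  (limn_esup (fun p => (D p.+1 / D p)%:E) < +oo)%E.
Proof.
apply: le_lt_trans (limn_esup_le (M := (K * ln K * L / c + K / c ^+ 2 + C + 1)%:E) _)
  (ltry _) => p.
by rewrite lee_fin ler_pdivrMr ?gap_succ_le //; apply: lt_le_trans (gap_ge1 p).
Qed.

Lemma zeta_gap_sum_cvg0 (zeta : R -> \bar R) (k : R) :
  1 <= k -> 1 <= rho * k -> neg_log_limsup zeta ->
  (fun p => eabs_invpow (zeta (T p)) (2 * k) *
            \sum_(1 <= i < p.+1) (T i - T i.-1) `^ (- k)) @ \oo --> 0.
Proof.
move=> k1 rk zeta_neg.
have : (L `^ k + 1) * (eabs_invpow (zeta x) (2 * k) * ln x) @[x --> +oo] --> 0.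
  by rewrite -(mulr0 (L `^ k + 1)); apply: cvgM; [exact: cvg_cst | exact: eabs_invpow_ln_cvgy0].
move/(cvg0_norm_le_comp t_cvgy); apply; apply: nearW => p.
have E0 : 0 <= eabs_invpow (zeta (T p)) (2 * k).
  by case: (zeta (T p)) => //= r; exact: powR_ge0.
rewrite ger0_norm ?mulr_ge0 ?sumr_ge0 //; last by move=> i _; exact: powR_ge0.
by rewrite mulrCA ler_wpM2l ?sum_gap_powRN_le.
Qed.

End GapSequence.

Lemma hseq_powRN_inv (R : realType) (alpha : R) (n : nat) : 0 < alpha ->
  hseq alpha n `^ (- alpha^-1) = n%:R.
Proof.
move=> alpha0; rewrite /hseq -powRrM mulrNN mulfV ?gt_eqF //.
by rewrite powRr1 ?ler0n.
Qed.

Lemma indN_nat (R : realType) (n : nat) : (0 < n)%N -> indN (n%:R : R) = 1.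
Proof. by move=> n0; rewrite /indN asboolT //; exists n. Qed.

Theorem proposition2 (R : realType)
  (C alpha rho c : R) (t0 : nat) (t : nat -> nat) (Cs : nat -> R)
  (hC : 1 <= C) (halpha : 0 < alpha)
  (hrho0 : 0 < rho) (hrho1 : rho < Num.min alpha 1)
  (hc0 : 0 < c) (hc1 : c < 1)
  (ht0pos : (0 < t0)%N) (ht0 : t 0%N = t0)
  (hCs : forall p, c * (t p)%:R `^ rho <= Cs p <= (t p)%:R `^ rho / c)
  (hrec : forall p, ((t p.+1)%:R : R) =
          (t p)%:R + (Num.ceil (Num.max (Cs p * ln (t p)%:R) C))%:~R) :
  let h := hseq alpha in
  (* (1) *)
  ((fun p : nat => ln (h (t p)) / ((t p.+1)%:R - (t p)%:R)) @ \oo --> (0 : R))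
  /\ ((fun p : nat => ((t p.+1)%:R - (t p)%:R) *
                \sum_((t p).+1 <= s < t p.+1) h s ^+ 2) @ \oo --> (0 : R))
  (* (2) *)
  /\ (forall p, h (t p.+1) < h (t p))
  /\ (exists2 alpha' : R, 0 < alpha' &
        ((0 : \bar R) < limn_einf (fun p : nat => ((h (t p)) * (t p)%:R `^ alpha'
                                 + (t p)%:R `^ (- alpha') / h (t p))%:E))%E)
  (* (3) *)
  /\ (limn_esup (fun p : nat => (((t p.+2)%:R - (t p.+1)%:R)
                           / ((t p.+1)%:R - (t p)%:R))%:E) < (+oo : \bar R))%E
  (* (4) *)
  /\ (forall (d : nat) (dO dY : measure_display)
        (Om : measurableType dO) (Y : measurableType dY) (P : probability Om R)
        (Ys : nat -> Om -> Y) (nu : {measure set Y -> \bar R})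
        (Theta : set 'rV[R]_d) (f : 'rV[R]_d -> Y -> R) (theta_s : 'rV[R]_d)
        (k : R),
        iid_seq P Ys -> density_model P Ys nu Theta f theta_s ->
        (k = 2^-1 \/ exists n : nat, (0 < n)%N /\ k = n%:R) ->
        (1 + rho) / rho < k ->
        let S := fun p : nat =>
          \sum_(1 <= i < p.+1) ((t i)%:R - (t i.-1)%:R) `^ (- (k * indN k)) in
        let concl := fun zeta : R -> \bar R =>
          exists2 beta : R, 0 < beta &
            ((fun p : nat => eabs_invpow (zeta (h (t p) `^ (- beta))) (2 * k) * S p)
               @ \oo --> (0 : R)) in
        (A6_i P Ys Theta f theta_s k -> concl (zeta1 P Ys Theta f theta_s))
        /\ (A6_ii P Ys Theta f theta_s -> concl (zeta2 P Ys Theta f theta_s))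
        /\ (A6_iii P Ys Theta f theta_s k -> concl (zeta3 P Ys Theta f theta_s))).
Proof.
have [rho_alpha rho1] : rho < alpha /\ rho < 1 by move: hrho1; rewrite lt_min => /andP.
have t0_gt0 : (0 < t 0)%N by rewrite ht0.
move=> h; split; first exact: (ln_hseq_div_gap_cvg0 hC hrho0 hc0 t0_gt0 hCs hrec halpha).
split; first exact: (gap_mul_sum_hseq_sqr_cvg0 hC hrho0 hc0 t0_gt0 hCs hrec rho_alpha).
split; first by move=> p; exact: (hseq_t_decreasing hC t0_gt0 hrec p halpha).
split; first by exists alpha; rewrite // (limn_einf_hseq_powR hC t0_gt0 hrec) lte_fin.
split; first exact: (limn_esup_gap_ratio_lty hC hrho0 rho1 hc0 t0_gt0 hCs hrec).
move=> d dO dY Om Y P Ys nu Theta f theta_s k _ _ k_dom k_big S concl.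
have k_rho : 1 + rho < k * rho by rewrite -ltr_pdivrMr.
have [n n0 k_n] : exists2 n : nat, (0 < n)%N & k = n%:R.
  case: k_dom => [k_half | [n [n0 ->]]]; last by exists n.
  by move: k_rho; rewrite k_half; lra.
subst k.
have k1 : 1 <= (n%:R : R) by rewrite ler1n.
have rk : 1 <= rho * n%:R.
  by rewrite mulrC ltW // (le_lt_trans _ k_rho) // lerDl ltW.
have conclP zeta : neg_log_limsup zeta -> concl zeta.
  move=> zeta_neg; exists alpha^-1; first by rewrite invr_gt0.
  rewrite /S indN_nat // mulr1; under eq_fun do rewrite hseq_powRN_inv //.
  exact: (zeta_gap_sum_cvg0 hC hrho0 rho1 hc0 t0_gt0 hCs hrec k1 rk zeta_neg).
by split; [case=> _ /conclP | split=> [/conclP | [_ /conclP]]].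
Qed.
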